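(* Let $f : X \to \mathbb{R}$. The following conditions are equivalent: (C1) $f$ is a limsup function; (C2) there is a sequence $g_0, g_1, \dots$ of lower semicontinuous functions $X \to \mathbb{R}$ converging pointwise to $f$; (C3) there is a non-increasing sequence $g_0 \ge g_1 \ge \cdots$ of lower semicontinuous functions $X \to \mathbb{R}$ converging pointwise to $f$; (C4) the subgraph $\mathrm{subgr}(f) = \{(x,r) \in X \times \mathbb{R} : f(x) \ge r\}$ is a $\mathbf{\Pi}^0_2$ (i.e. $G_\delta$) subset of $X \times \mathbb{R}$; (C5) for each $r \in \mathbb{R}$, the set $\{f \ge r\} = \{x \in X : f(x) \ge r\}$ is a $\mathbf{\Pi}^0_2$ subset of $X$.
   Context: Let $A$ be a non-empty countable set and $T$ a pruned tree on $A$ (a set of finite sequences of elements of $A$, closed under initial segments, in which every sequence has a proper extension in $T$). Let $X$ be the set of infinite branches of $T$, i.e. the sequences $x = (x_0, x_1, \dots) \in A^{\mathbb{N}}$ with $(x_0,\dots,x_t) \in T$ for all $t \in \mathbb{N}$. For $s \in T$, $O(s)$ denotes the set of $x \in X$ having $s$ as an initial segment; $X$ carries the topology generated by the base $\{O(s) : s \in T\}$. A function $f : X \to \mathbb{R}$ is a limsup function if there exists $u : T \to \mathbb{R}$ with $f(x) = \limsup_{t\to\infty} u(x_0,\dots,x_t)$ for every $x \in X$. *)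

From HB Require Import structures.
From mathcomp Require Import all_boot all_order all_algebra.
From mathcomp Require Import all_classical all_reals all_analysis.
Set Implicit Arguments. Unset Strict Implicit. Unset Printing Implicit Defensive.
Import Order.TTheory GRing.Theory Num.Theory.
Import numFieldNormedType.Exports.
Local Open Scope classical_set_scope.
Local Open Scope ring_scope.

Section Trees.
Variable A : countType.

Definition is_tree (T : set (seq A)) : Prop :=
  forall s n, T s -> T (take n s).

Definition is_pruned (T : set (seq A)) : Prop :=
  forall s, T s -> exists t : seq A, t <> [::] /\ T (s ++ t).

Definition prefix (x : nat -> A) (t : nat) : seq A := mkseq x t.+1.

Definition branches (T : set (seq A)) : Type :=
  {x : nat -> A | forall t, T (prefix x t)}.

Definition O (T : set (seq A)) (s : seq A) : set (branches T) :=
  [set x | mkseq (proj1_sig x) (size s) = s].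

(* Open sets of X in the topology generated by the base {O(s) : s in T}:
   unions of basic sets. *)
Definition openX (T : set (seq A)) (U : set (branches T)) : Prop :=
  forall x, U x -> exists s, T s /\ O s x /\ O s `<=` U.

(* Open sets of X x R in the product topology (base: O(s) x open intervals). *)
Definition openXR (R : realType) (T : set (seq A)) (W : set (branches T * R)) : Prop :=
  forall p, W p -> exists s, T s /\ O s p.1 /\
    exists2 e : R, 0 < e &
      forall y r, O s y -> `|r - p.2| < e -> W (y, r).

Definition Pi02_X (T : set (seq A)) (S : set (branches T)) : Prop :=
  exists U : nat -> set (branches T),
    (forall n, openX (U n)) /\ S = \bigcap_n U n.

Definition Pi02_XR (R : realType) (T : set (seq A)) (S : set (branches T * R)) : Prop :=
  exists U : nat -> set (branches T * R),
    (forall n, openXR (U n)) /\ S = \bigcap_n U n.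

Definition lsc (R : realType) (T : set (seq A)) (g : branches T -> R) : Prop :=
  forall r : R, openX [set x | r < g x].

(* f is a limsup function: f(x) = limsup_t u(x_0,...,x_t) for some u : T -> R
   (u is given as a function on all finite sequences; only its values on T
   matter since every prefix of a branch lies in T). *)
Definition limsup_function (R : realType) (T : set (seq A)) (f : branches T -> R) : Prop :=
  exists u : seq A -> R, forall x : branches T,
    ((f x)%:E = limn_esup (fun t => (u (prefix (proj1_sig x) t))%:E))%E.

Definition subgr (R : realType) (T : set (seq A)) (f : branches T -> R) : set (branches T * R) :=
  [set p | p.2 <= f p.1].

End Trees.

(* We prove the cycle of implications C1 -> C3 -> C2 -> C4 -> C5 -> C1.
   - Topology of X: a set is open iff membership of x is decided by a finite
     prefix of x ([openXP]); finite intersections and "P -> U" sets of open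
     sets are open.
   - C1 -> C3: if f(x) = limsup_t u(x|t), the tail suprema
     g_n(x) = sup_{t >= n} u(x|t) are finite, lower semicontinuous (each
     term u(x|t) only depends on a prefix of x), non-increasing in n and
     converge to f(x).
   - C3 -> C2 is trivial, and C2 -> C4 writes subgr(f) as the intersection
     over m of the open sets {(x,r) : exists n >= m, r < g_n(x) + 1/(m+1)}.
   - C4 -> C5: {f >= r} is the section at r of subgr(f).
   - C5 -> C1: enumerate the rationals q_0, q_1, ...  From open sets with
     {f >= q} = cap_n U(q,n) build open sets W(i,n), decreasing in n and in q_i,
     with cap_n W(i,n) = {f >= q_i}.  The level of i at a node s counts the n
     for which O(s) is included in W(i,n); u(s) is the largest q_i whose level
     just increased at s (and is >= i).  Along x, the level of i is unbounded
     exactly when q_i <= f(x), which gives limsup_t u(x|t) = f(x). *)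

From Pilot Require Import Defs.
From HB Require Import structures.
From mathcomp Require Import all_boot all_order all_algebra.
From mathcomp Require Import all_classical all_reals all_analysis.
From mathcomp Require Import lra.
Import Order.TTheory GRing.Theory Num.Theory.
Import numFieldNormedType.Exports.
Local Open Scope classical_set_scope.
Local Open Scope ring_scope.
Set Implicit Arguments. Unset Strict Implicit. Unset Printing Implicit Defensive.

Lemma eventually_forall_le (P : nat -> nat -> Prop) n :
  (forall j t t', (t <= t')%N -> P j t -> P j t') ->
  (forall j, (j <= n)%N -> exists t, P j t) ->
  exists t, forall j, (j <= n)%N -> P j t.
Proof.
move=> mono; elim: n => [|n IH] h.
  have [t ht] := h 0%N (leqnn 0).
  by exists t => j; rewrite leqn0 => /eqP ->.
have [t1 ht1] := IH (fun j jn => h j (leqW jn)).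
have [t2 ht2] := h n.+1 (leqnn _).
exists (maxn t1 t2) => j; rewrite leq_eqVlt ltnS => /orP[/eqP ->|jn].
  by apply: mono ht2; exact: leq_maxr.
by apply: mono (ht1 j jn); exact: leq_maxl.
Qed.

Lemma nondecreasing_jump (a : nat -> nat) M t0 :
  (forall t t', (t <= t')%N -> (a t <= a t')%N) ->
  (a M < a t0)%N -> exists t, (M <= t)%N /\ (a t < a t.+1)%N.
Proof.
move=> mono; elim: t0 => [|t0 IH] h.
  by have := mono 0%N M (leq0n _); rewrite leqNgt h.
case: (ltnP (a M) (a t0)) => h'; first exact: IH.
exists t0; split; last exact: leq_ltn_trans h' h.
rewrite leqNgt; apply/negP => t0M.
by have := mono t0.+1 M t0M; rewrite leqNgt h.
Qed.

Lemma bounded_nondecreasing_stable (a : nat -> nat) B :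
  (forall t t', (t <= t')%N -> (a t <= a t')%N) -> (forall t, (a t <= B)%N) ->
  exists T0, forall t, (T0 <= t)%N -> a t = a T0.
Proof.
move=> mono hB.
have ex : exists v, `[< exists t, a t = v >] by exists (a 0%N); apply/asboolP; exists 0%N.
have bd v : `[< exists t, a t = v >] -> (v <= B)%N by move=> /asboolP [t <-].
case: (ex_maxnP ex bd) => v /asboolP [T0 hT0] hmax.
exists T0 => t tT; apply/eqP; rewrite eqn_leq (mono _ _ tT) andbT hT0.
by apply: hmax; apply/asboolP; exists t.
Qed.

Section BranchTopology.
Context {A : countType} (T : set (seq A)).
Local Notation X := (branches T).
Local Notation pre := Defs.prefix.

Definition agree (x y : X) (t : nat) : Prop :=
  forall k, (k <= t)%N -> sval y k = sval x k.

Lemma agree_mono x y t t' : (t <= t')%N -> agree x y t' -> agree x y t.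
Proof. by move=> tt' h k kt; apply: h; exact: leq_trans kt tt'. Qed.

Lemma prefix_agree (x y : X) t : agree x y t -> pre (sval y) t = pre (sval x) t.
Proof.
move=> h; apply/eq_in_map => k.
by rewrite mem_iota add0n ltnS => /andP[_ hk]; exact: h.
Qed.

Lemma O_prefix (x y : X) t : @O _ T (pre (sval x) t) y <-> agree x y t.
Proof.
rewrite /O /Defs.prefix size_mkseq; split.
  move=> h k kt; have := congr1 (fun s => nth (sval x 0%N) s k) h.
  by rewrite /= !nth_mkseq.
by move=> h; apply/eq_in_map => k; rewrite mem_iota add0n ltnS => /andP[_ hk]; exact: h.
Qed.

Lemma O_agree (x y : X) s : @O _ T s x -> agree x y (size s) -> @O _ T s y.
Proof.
rewrite /O => hx h; apply: etrans hx; apply/eq_in_map => k.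
by rewrite mem_iota add0n => /andP[_ hk]; apply: h; exact: ltnW.
Qed.

Lemma openXP (U : set X) :
  openX U <-> forall x, U x -> exists t, forall y, agree x y t -> U y.
Proof.
split.
  move=> hU x Ux; have [s [Ts [Osx sub]]] := hU x Ux.
  by exists (size s) => y h; apply: sub; exact: O_agree Osx h.
move=> hU x Ux; have [t ht] := hU x Ux.
exists (pre (sval x) t); split; first exact: (proj2_sig x t).
split; first exact/O_prefix.
by move=> y /O_prefix; exact: ht.
Qed.

(* For a fixed proposition P, the set {x | P -> x in U} is U or X. *)
Lemma openX_imp (P : Prop) (U : set X) : openX U -> openX [set x | P -> U x].
Proof.
move=> /openXP hU; apply/openXP => x hx; have [p|np] := pselect P.
  by have [t ht] := hU x (hx p); exists t => y /ht Uy _.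
by exists 0%N => y _ /np.
Qed.

Lemma openX_bounded_cap (U : nat -> set X) n :
  (forall k, (k <= n)%N -> openX (U k)) -> openX [set x | forall k, (k <= n)%N -> U k x].
Proof.
move=> hU; apply/openXP => x hx.
have [t ht] := @eventually_forall_le (fun k t => forall y, agree x y t -> U k y) n
  (fun k t t' tt' h y hy => h y (agree_mono tt' hy))
  (fun k kn => proj1 (openXP _) (hU k kn) x (hx k kn)).
by exists t => y hy k kn; exact: ht.
Qed.

End BranchTopology.

Section Implications.
Context {R : realType} {A : countType} (T : set (seq A)).
Local Notation X := (branches T).
Local Notation pre := Defs.prefix.

(* C4 -> C5: {f >= r} is the section at r of subgr(f), and sections of open
   subsets of X x R are open in X. *)
Lemma Pi02_subgr_sections (f : X -> R) :
  Pi02_XR (subgr f) -> forall r : R, Pi02_X [set x | r <= f x].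
Proof.
move=> [U [hU hS]] r; exists (fun n => [set x | U n (x, r)]); split.
  move=> n x Uxr; have [s [Ts [Osx [e e0 he]]]] := hU n (x, r) Uxr.
  exists s; split=> //; split=> // y Osy /=; apply: he => //.
  by rewrite subrr normr0.
apply/seteqP; split=> x /=; have /= E := congr1 (fun S => S (x, r)) hS.
  by move=> h n _; have : subgr f (x, r) := h; rewrite E; apply.
by move=> h; suff : subgr f (x, r) by []; rewrite E => n _; exact: h.
Qed.

Lemma eventually_nat (P : nat -> Prop) :
  (\forall n \near \oo, P n) -> exists N, forall n, (N <= n)%N -> P n.
Proof. by move=> [N _ HN]; exists N. Qed.

Lemma eventually_inv_lt (e : R) : 0 < e -> exists N, forall m, (N <= m)%N -> m.+1%:R^-1 < e.
Proof.
move=> e0; apply: eventually_nat (fun n => n.+1%:R^-1 < e) _.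
exact: (near_infty_natSinv_lt (PosNum e0)).
Qed.

(* C2 -> C4: with g_n lower semicontinuous and g_n -> f pointwise,
   subgr(f) = cap_m {(x,r) : exists n >= m, r < g_n(x) + 1/(m+1)}. *)
Lemma lsc_limit_subgr_Pi02 (f : X -> R) (g : nat -> X -> R) :
  (forall n, lsc (g n)) -> (forall x, (fun n => g n x) @ \oo --> f x) ->
  Pi02_XR (subgr f).
Proof.
move=> hl hc.
exists (fun m => [set p : X * R | exists n, (m <= n)%N /\ p.2 < g n p.1 + m.+1%:R^-1]).
split.
  move=> m [x r] [n [mn hr]] /=; set d := m.+1%:R^-1 : R in hr *.
  pose del := (g n x + d - r) / 2.
  have del0 : 0 < del by rewrite /del divr_gt0 // subr_gt0.
  have hx : g n x - del < g n x by rewrite ltrBlDr ltrDl.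
  have [s [Ts [Osx sub]]] := hl n (g n x - del) x hx.
  exists s; split => //; split => //; exists del => // y r' Osy.
  rewrite ltr_norml => /andP[h1 h2]; exists n; split => //=.
  have := sub y Osy; rewrite /= /del => h3.
  move: h2 h3 hr; rewrite /del; clearbody d; lra.
apply/seteqP; split => [[x r]|[x r]] /=.
  move=> hr m _ /=.
  have d0 : 0 < m.+1%:R^-1 :> R by rewrite invr_gt0.
  have [N HN] := eventually_nat (proj1 (cvgrPdist_lt _ _) (hc x) _ d0).
  exists (maxn m N); split; first exact: leq_maxl.
  have := HN (maxn m N) (leq_maxr _ _); rewrite ltr_norml => /andP[h1 h2].
  move: h1 h2 hr; rewrite /subgr /=; set d := (m.+1%:R^-1 : R); clearbody d; lra.
move=> h; rewrite /subgr /= leNgt; apply/negP => hlt.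
pose e := (r - f x) / 2.
have e0 : 0 < e by rewrite /e divr_gt0 // subr_gt0.
have [N HN] := eventually_nat (proj1 (cvgrPdist_lt _ _) (hc x) _ e0).
have [N' HN'] := eventually_inv_lt e0.
have [n [mn hn]] := h (maxn N N') I.
have := HN n (leq_trans (leq_maxl _ _) mn); rewrite ltr_norml => /andP[h1 h2].
have := HN' (maxn N N') (leq_maxr _ _) => h3.
move: h1 h2 h3 hn hlt; rewrite /e /=.
set d := ((maxn N N').+1%:R^-1 : R); clearbody d; lra.
Qed.

Section LimsupToTailSuprema.
Local Open Scope ereal_scope.

Lemma limn_esup_inf (w : (\bar R)^nat) : limn_esup w = ereal_inf (range (esups w)).
Proof. rewrite limn_esup_lim; apply: cvg_lim => //; exact: cvg_esups_inf. Qed.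

Lemma esups_le_max_head (a : nat -> R) n m :
  esups (fun t => (a t)%:E) n <=
  Order.max (esups (fun t => (a t)%:E) m) ((\big[Order.max/0%R]_(k < m) a k)%:E).
Proof.
apply: ge_ereal_sup => _ [k /= nk <-]; rewrite le_max; case: (leqP m k) => mk.
  by apply/orP; left; apply: ereal_sup_ubound; exists k.
apply/orP; right; rewrite lee_fin.
exact: (le_bigmax 0%R (fun i : 'I_m => a i) (Ordinal mk)).
Qed.

Variables (f : X -> R) (u : seq A -> R).
Hypothesis hu : forall x : X, (f x)%:E = limn_esup (fun t => (u (pre (sval x) t))%:E).
Let v (x : X) : nat -> \bar R := fun t => (u (pre (sval x) t))%:E.

(* Finiteness: below by one term, above since the limsup f(x) is finite. *)
Lemma esups_fin_num x n : esups (v x) n \is a fin_num.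
Proof.
rewrite fin_numElt; apply/andP; split.
  apply: (lt_le_trans (ltNyr (u (pre (sval x) n)))).
  by apply: ereal_sup_ubound; exists n => /=.
have : limn_esup (v x) < +oo by rewrite -hu ltry.
rewrite limn_esup_inf => /ereal_inf_lt [_ [m _ <-] hm].
by apply: le_lt_trans (esups_le_max_head _ n m) _; rewrite gt_max hm ltry.
Qed.

Definition tail_sup n x : R := fine (esups (v x) n).

Lemma tail_sup_lsc n : lsc (tail_sup n).
Proof.
move=> r; apply/openXP => x /= hr.
have : r%:E < esups (v x) n by rewrite -(fineK (esups_fin_num x n)) lte_fin.
move=> /ereal_sup_gt [_ [k /= nk <-] hk].
exists k => y hy /=; rewrite /tail_sup -lte_fin fineK ?esups_fin_num //.
apply: lt_le_trans hk _.
have -> : v x k = v y k by rewrite /v (prefix_agree hy).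
by apply: ereal_sup_ubound; exists k.
Qed.

Lemma tail_sup_nonincreasing n x : (tail_sup n.+1 x <= tail_sup n x)%R.
Proof. by apply: fine_le; rewrite ?esups_fin_num //; exact: nonincreasing_esups. Qed.

Lemma tail_sup_cvg x : (fun n => tail_sup n x) @ \oo --> f x.
Proof.
have : esups (v x) @ \oo --> (f x)%:E.
  by rewrite hu limn_esup_inf; exact: cvg_esups_inf.
by move/fine_cvgP => [_ h]; exact: h.
Qed.

End LimsupToTailSuprema.

Lemma limsup_function_tail_sups (f : X -> R) : limsup_function f ->
  exists g : nat -> X -> R,
      (forall n, lsc (g n)) /\ (forall n x, g n.+1 x <= g n x) /\
      (forall x, (fun n => g n x) @ \oo --> f x).
Proof.
move=> [u hu]; exists (tail_sup u); split; first exact: tail_sup_lsc.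
by split; [exact: tail_sup_nonincreasing | exact: tail_sup_cvg].
Qed.

Definition qq (i : nat) : R := if @unpickle rat i is Some r then ratr r else 0.

Lemma qq_between a b : a < b -> exists i, a < qq i < b.
Proof.
move=> ab; have [r hr] := rat_in_itvoo ab.
by exists (pickle r); rewrite /qq pickleK; rewrite in_itv /= in hr.
Qed.

Lemma ereal_ge_by_qq (e : \bar R) (r : R) :
  (forall i, qq i < r -> ((qq i)%:E <= e)%E) -> (r%:E <= e)%E.
Proof.
case: e => [s| |] h.
- rewrite lee_fin leNgt; apply/negP => hs.
  have [i /andP[h1 h2]] := qq_between hs.
  by move: (h i h2); rewrite lee_fin leNgt h1.
- exact: leey.
- have r1 : r - 1 < r by rewrite ltrBlDr ltrDl ltr01.
  have [i /andP[_ h2]] := qq_between r1.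
  by move: (h i h2); rewrite leeNy_eq.
Qed.

Lemma ereal_le_by_qq (e : \bar R) (r : R) :
  (forall k, r < qq k -> (e <= (qq k)%:E)%E) -> (e <= r%:E)%E.
Proof.
case: e => [s| |] h.
- rewrite lee_fin leNgt; apply/negP => hs.
  have [k /andP[h1 h2]] := qq_between hs.
  by move: (h k h1); rewrite lee_fin leNgt h2.
- have r1 : r < r + 1 by rewrite ltrDl ltr01.
  have [k /andP[h1 _]] := qq_between r1.
  by move: (h k h1); rewrite leye_eq.
- exact: leNye.
Qed.

Section Pi02ToLimsup.
Variables (f : X -> R) (U : R -> nat -> set X).
Hypothesis U_open : forall r n, openX (U r n).
Hypothesis U_cap : forall r, [set x | r <= f x] = \bigcap_n U r n.

Definition W i n : set X := [set x | forall j, (j <= n)%N -> qq j <= qq i ->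
  forall m, (m <= n)%N -> U (qq j) m x].

Lemma W_open i n : openX (W i n).
Proof.
apply: openX_bounded_cap => j _.
apply: (openX_imp (U := [set x | forall m, (m <= n)%N -> U (qq j) m x])).
by apply: openX_bounded_cap => m _; exact: U_open.
Qed.

Lemma W_antimono_n i n n' : (n <= n')%N -> W i n' `<=` W i n.
Proof.
move=> nn' x hx j jn hj m mn.
by apply: hx => //; [exact: leq_trans jn nn' | exact: leq_trans mn nn'].
Qed.

Lemma W_antimono_q i k n : qq i <= qq k -> W k n `<=` W i n.
Proof. by move=> ik x hx j jn hj; apply: hx => //; exact: le_trans hj ik. Qed.

Lemma W_of_ge i (x : X) n : qq i <= f x -> W i n x.
Proof.
move=> h j jn hj m mn.
have : [set x | qq j <= f x] x by exact: le_trans hj h.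
by rewrite U_cap => H; exact: H m I.
Qed.

Lemma notW_of_lt i (x : X) : f x < qq i -> exists n, ~ W i n x.
Proof.
move=> hlt; apply: contrapT => hn.
have hW n : W i n x by apply: contrapT => hw; apply: hn; exists n.
have : [set x | qq i <= f x] x.
  rewrite U_cap => m _.
  exact: (hW (maxn i m) i (leq_maxl _ _) (lexx _) m (leq_maxr _ _)).
by rewrite /= leNgt hlt.
Qed.

Definition inW i n (s : seq A) : bool := `[< @O _ T s `<=` W i n >].
Definition level i (s : seq A) : nat :=
  (\max_(n <- iota 0 (size s) | inW i n s) n.+1)%N.

Lemma level_size i s : (level i s <= size s)%N.
Proof. by apply/bigmax_leqP_seq => n; rewrite mem_iota add0n => /andP[_ ns]. Qed.

Lemma level_le i x t b :
  (forall n, (n <= t)%N -> (forall y, agree x y t -> W i n y) -> (n < b)%N) ->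
  (level i (pre (sval x) t) <= b)%N.
Proof.
move=> H; apply/bigmax_leqP_seq => n.
rewrite /Defs.prefix size_mkseq mem_iota add0n ltnS => /andP[_ nt] /asboolP h.
exact: (H n nt (fun y hy => h y (proj2 (O_prefix x y t) hy))).
Qed.

Lemma level_gt i x t n : (n <= t)%N -> (forall y, agree x y t -> W i n y) ->
  (n < level i (pre (sval x) t))%N.
Proof.
move=> nt h; apply: (@leq_bigmax_seq _ _ _ (fun n => n.+1) n).
  by rewrite /Defs.prefix size_mkseq mem_iota add0n ltnS.
by apply/asboolP => y hy; apply: h; exact/(O_prefix x y t).
Qed.

Lemma level_mono_t i (x : X) t t' : (t <= t')%N ->
  (level i (pre (sval x) t) <= level i (pre (sval x) t'))%N.
Proof.
move=> tt'; apply: level_le => n nt h; apply: level_gt; first exact: leq_trans nt tt'.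
by move=> y hy; apply: h; exact: agree_mono tt' hy.
Qed.

Lemma level_antimono_q i k (x : X) t : qq i <= qq k ->
  (level k (pre (sval x) t) <= level i (pre (sval x) t))%N.
Proof.
move=> ik; apply: level_le => n nt h; apply: level_gt => // y hy.
exact: (W_antimono_q ik (h y hy)).
Qed.

Lemma level_bounded i (x : X) n0 t : ~ W i n0 x -> (level i (pre (sval x) t) <= n0)%N.
Proof.
move=> hn; apply: level_le => n nt h; rewrite ltnNge; apply/negP => n0n.
by apply: hn; apply: (W_antimono_n n0n); apply: h.
Qed.

Lemma level_unbounded i (x : X) : (forall n, W i n x) ->
  forall N, exists t, (N <= level i (pre (sval x) t))%N.
Proof.
move=> hW N; have [t0 ht0] := proj1 (openXP _) (@W_open i N) x (hW N).
exists (maxn t0 N); apply: ltnW; apply: level_gt; first exact: leq_maxr.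
by move=> y hy; apply: ht0; apply: agree_mono hy; exact: leq_maxl.
Qed.

Definition parent (s : seq A) : seq A := take (size s).-1 s.

Lemma parent_prefix x t : parent (pre x t.+1) = pre x t.
Proof.
rewrite /parent /Defs.prefix size_mkseq /mkseq -map_take take_iota.
by rewrite (minn_idPl (leqnSn t.+1)).
Qed.

Definition hit i (s : seq A) : bool := (level i (parent s) < level i s)%N.

Definition witness (s : seq A) : R :=
  \big[Order.max/ - (size s)%:R]_(i <- iota 0 (size s).+1 | (i <= level i s)%N && hit i s)
    qq i.

Lemma witness_frequently_ge i (x : X) : qq i < f x ->
  forall N, exists t, (N <= t)%N /\ qq i <= witness (pre (sval x) t).
Proof.
move=> hi N.
have hW n : W i n x by apply: W_of_ge; exact: ltW.
pose a t := level i (pre (sval x) t).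
have mono t t' : (t <= t')%N -> (a t <= a t')%N by exact: level_mono_t.
have [N1 hN1] := level_unbounded hW i.
pose M := maxn N N1.
have [t0 ht0] := level_unbounded hW (a M).+1.
have [t [Mt ht]] := nondecreasing_jump mono ht0.
exists t.+1; split; first by apply: leq_trans (leqW Mt); exact: leq_maxl.
have hiM : (i <= a t.+1)%N.
  by apply: leq_trans hN1 (mono _ _ _); apply: leq_trans (leqW Mt); exact: leq_maxr.
apply: (le_bigmax_seq _ i
  (fun i => (i <= level i (pre (sval x) t.+1))%N && hit i (pre (sval x) t.+1)) qq).
  by rewrite mem_iota add0n ltnS; apply: leq_trans hiM _; exact: level_size.
by rewrite /= hiM /hit parent_prefix.
Qed.

Lemma levels_stabilize k (x : X) : f x < qq k ->
  exists n0 T0, (forall i t, qq k <= qq i -> (level i (pre (sval x) t) <= n0)%N) /\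
    forall i, (i <= n0)%N -> qq k <= qq i -> forall t, (T0 <= t)%N ->
      level i (pre (sval x) t) = level i (pre (sval x) T0).
Proof.
move=> hk; have [n0 hn0] := notW_of_lt hk.
have hb i t : qq k <= qq i -> (level i (pre (sval x) t) <= n0)%N.
  by move=> ki; apply: leq_trans (level_antimono_q x t ki) (level_bounded t hn0).
pose P i T0 := qq k <= qq i -> forall t, (T0 <= t)%N ->
  level i (pre (sval x) t) = level i (pre (sval x) T0).
have monoP i T0 T1 : (T0 <= T1)%N -> P i T0 -> P i T1.
  move=> T01 h ki t T1t.
  by rewrite (h ki t (leq_trans T01 T1t)) (h ki T1 T01).
have hP i : (i <= n0)%N -> exists T0, P i T0.
  move=> _; have [ki|nki] := pselect (qq k <= qq i); last by exists 0%N => /nki.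
  have [T0 hT0] := bounded_nondecreasing_stable
    (fun t t' => level_mono_t i x (t:=t) (t':=t')) (fun t => hb i t ki).
  by exists T0 => _ t; exact: hT0.
have [T0 hT0] := eventually_forall_le monoP hP.
by exists n0, T0; split => // i i_n0; exact: hT0.
Qed.

Lemma witness_eventually_le k (x : X) : f x < qq k ->
  exists N, forall t, (N <= t)%N -> witness (pre (sval x) t) <= qq k.
Proof.
move=> hk; have [n0 [T0 [hb hT0]]] := levels_stabilize hk.
exists (maxn T0.+1 (Num.truncn (- qq k))) => t hNt.
have T0t : (T0 < t)%N by apply: leq_trans hNt; exact: leq_maxl.
apply: bigmax_le.
  rewrite /Defs.prefix size_mkseq lerNl; apply: ltW.
  apply: lt_le_trans (truncnS_gt _) _.
  by rewrite ler_nat ltnS; apply: leq_trans hNt; exact: leq_maxr.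
move=> i /andP[hi hh]; rewrite leNgt; apply/negP => /ltW ki.
have i_n0 : (i <= n0)%N by apply: leq_trans hi _; exact: hb.
case: t hNt T0t hh {hi} => // t _ T0t.
rewrite /hit parent_prefix (hT0 i i_n0 ki t T0t) (hT0 i i_n0 ki t.+1 (leqW T0t)).
by rewrite ltnn.
Qed.

Lemma witness_limsup (x : X) :
  (f x)%:E = limn_esup (fun t => (witness (pre (sval x) t))%:E).
Proof.
rewrite limn_esup_inf; apply/eqP; rewrite eq_le; apply/andP; split.
  apply: le_ereal_inf_tmp => _ [n _ <-]; apply: ereal_ge_by_qq => i hi.
  have [t [nt ht]] := witness_frequently_ge hi n.
  apply: (@le_trans _ _ (witness (pre (sval x) t))%:E); first by rewrite lee_fin.
  by apply: ereal_sup_ubound; exists t.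
apply: ereal_le_by_qq => k hk; have [N hN] := witness_eventually_le hk.
apply: (@le_trans _ _ (esups (fun t => (witness (pre (sval x) t))%:E) N)).
  by apply: ereal_inf_lbound; exists N.
by apply: ge_ereal_sup => _ [t /= Nt <-]; rewrite lee_fin; exact: hN.
Qed.

End Pi02ToLimsup.

Lemma Pi02_superlevels_limsup (f : X -> R) :
  (forall r : R, Pi02_X [set x | r <= f x]) -> limsup_function f.
Proof.
move=> H; have [U hU] := choice H.
exists (witness U) => x.
exact: (witness_limsup (fun r => proj1 (hU r)) (fun r => proj2 (hU r))).
Qed.

End Implications.

Unset Implicit Arguments.

Theorem mainTheorem1 (R : realType) (A : countType) (a0 : A)
    (T : set (seq A)) (hT : is_tree T) (hP : is_pruned T)
    (f : branches T -> R) :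
  let C1 := limsup_function f in
  let C2 := exists g : nat -> branches T -> R,
      (forall n, lsc (g n)) /\ (forall x, (fun n => g n x) @ \oo --> f x) in
  let C3 := exists g : nat -> branches T -> R,
      (forall n, lsc (g n)) /\ (forall n x, g n.+1 x <= g n x) /\
      (forall x, (fun n => g n x) @ \oo --> f x) in
  let C4 := Pi02_XR (subgr f) in
  let C5 := forall r : R, Pi02_X [set x | r <= f x] in
  (C1 <-> C2) /\ (C1 <-> C3) /\ (C1 <-> C4) /\ (C1 <-> C5).
Proof.
move=> C1 C2 C3 C4 C5.
have h13 : C1 -> C3 := @limsup_function_tail_sups R A T f.
have h32 : C3 -> C2 by move=> [g [hl [_ hc]]]; exists g.
have h24 : C2 -> C4 by move=> [g [hl hc]]; exact: lsc_limit_subgr_Pi02 hl hc.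
have h45 : C4 -> C5 := @Pi02_subgr_sections R A T f.
have h51 : C5 -> C1 := @Pi02_superlevels_limsup R A T f.
by split; [|split; [|split]]; split; tauto.
Qed.
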